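(* Let $b_0:[t_0,T]\to\mathbb{R}$ be continuous and $b:[t_0,T]\to\mathbb{R}^3$ be given by $b(t)=\|b(t)\|\bigl(\sin\theta_b(t)\cos\varphi_b(t),\ \sin\theta_b(t)\sin\varphi_b(t),\ \cos\theta_b(t)\bigr)$ with $\|b(t)\|>0$ continuous and $\theta_b,\varphi_b$ continuously differentiable. Put $$\Omega_b(t)=\sqrt{\Bigl(\cos\theta_b(t)-\frac{\dot\varphi_b(t)}{2\|b(t)\|}\Bigr)^2+\sin^2\theta_b(t)},$$ assume $\Omega_b(t)>0$ on $[t_0,T]$, and assume that $$J_1:=\frac1{\Omega_b(t)}\Bigl(\cos\theta_b(t)-\frac{\dot\varphi_b(t)}{2\|b(t)\|}\Bigr),\qquad J_2:=\frac{\sin\theta_b(t)}{\Omega_b(t)}$$ are constant in $t$ (so $J_1^2+J_2^2=1$). Let $\gamma_b(t,t_0)=\int_{t_0}^t\|b(\tau)\|\Omega_b(\tau)d\tau$ and $\Delta(t)=\frac{\varphi_b(t)-\varphi_b(t_0)}2$, $\Sigma(t)=\frac{\varphi_b(t)+\varphi_b(t_0)}2$. Then for $H(t)=b_0(t)\mathbb{I}+b(t)\cdot\sigma$, $$U_H(t,t_0)=\exp\Bigl\{-i\int_{t_0}^tb_0(\tau)d\tau\Bigr\}\bigl(u_0(t,t_0)\mathbb{I}+i\,\tilde u(t,t_0)\cdot\sigma\bigr),$$ where $u_0=\cos\Delta\cos\gamma_b-J_1\sin\Delta\sin\gamma_b$, $\tilde u_1=-J_2\cos\Sigma\,\sin\gamma_b$,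 $\tilde u_2=-J_2\sin\Sigma\,\sin\gamma_b$, $\tilde u_3=-J_1\cos\Delta\sin\gamma_b-\sin\Delta\cos\gamma_b$ (with $\gamma_b=\gamma_b(t,t_0)$, $\Delta=\Delta(t)$, $\Sigma=\Sigma(t)$). Equivalently, $(u_0,\tilde u)$ is the solution of $\dot u_0=b\cdot\tilde u$, $\dot{\tilde u}=-u_0b+b\times\tilde u$, $u_0(t_0)=1$, $\tilde u(t_0)=0$; moreover for all $t_0\le s\le t\le T$ these functions satisfy $u_0(t,s)u_0(s,t_0)-\tilde u(t,s)\cdot\tilde u(s,t_0)=u_0(t,t_0)$ and $u_0(t,s)\tilde u(s,t_0)+u_0(s,t_0)\tilde u(t,s)-\tilde u(t,s)\times\tilde u(s,t_0)=\tilde u(t,t_0)$.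
   Context: $\sigma=(\sigma_1,\sigma_2,\sigma_3)$ are the Pauli matrices $\sigma_1=\begin{pmatrix}0&1\\1&0\end{pmatrix}$, $\sigma_2=\begin{pmatrix}0&-i\\i&0\end{pmatrix}$, $\sigma_3=\begin{pmatrix}1&0\\0&-1\end{pmatrix}$; $v\cdot\sigma=\sum_jv_j\sigma_j$; $\times$ is the vector product on $\mathbb{R}^3$; $\|\cdot\|$ the Euclidean norm. $\theta_b,\varphi_b$ are the polar and azimuthal spherical angles of $b(t)$. $U_H(t,t_0)$ is the solution of $i\frac{d}{dt}U_H(t,t_0)=H(t)U_H(t,t_0)$, $U_H(t_0,t_0)=\mathbb{I}$ on $\mathbb{C}^2$; $u_0(t,s),\tilde u(t,s)$ denote the same formulas with $t_0$ replaced by $s$. *)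

From Stdlib Require Import Reals.
From Coquelicot Require Import Coquelicot.
Open Scope R_scope.

Definition cont_in (a b : R) (f : R -> R) (t : R) : Prop :=
  filterlim f (within (fun s => a <= s <= b) (locally t)) (locally (f t)).

Definition is_deriv_in (a b : R) (f : R -> R) (t l : R) : Prop :=
  filterlim (fun s => (f s - f t) / (s - t))
    (within (fun s => a <= s <= b /\ s <> t) (locally t)) (locally l).

Definition is_cderiv_in (a b : R) (f : R -> C) (t : R) (l : C) : Prop :=
  is_deriv_in a b (fun s => fst (f s)) t (fst l) /\
  is_deriv_in a b (fun s => snd (f s)) t (snd l).

(* ---------- 2x2 complex matrices, indices false = 1, true = 2 ---------- *)
Definition mat2 := bool -> bool -> C.

Definition mid : mat2 := fun i j => if Bool.eqb i j then RtoC 1 else RtoC 0.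
Definition madd (A B : mat2) : mat2 := fun i j => Cplus (A i j) (B i j).
Definition mscale (c : C) (A : mat2) : mat2 := fun i j => Cmult c (A i j).
Definition mmul (A B : mat2) : mat2 :=
  fun i j => Cplus (Cmult (A i false) (B false j)) (Cmult (A i true) (B true j)).

Definition sigma1 : mat2 := fun i j =>
  match i, j with
  | false, true => RtoC 1 | true, false => RtoC 1 | _, _ => RtoC 0 end.
Definition sigma2 : mat2 := fun i j =>
  match i, j with
  | false, true => Copp Ci | true, false => Ci | _, _ => RtoC 0 end.
Definition sigma3 : mat2 := fun i j =>
  match i, j with
  | false, false => RtoC 1 | true, true => RtoC (-1) | _, _ => RtoC 0 end.

Definition dot_sigma (v1 v2 v3 : R) : mat2 :=
  madd (mscale (RtoC v1) sigma1)
       (madd (mscale (RtoC v2) sigma2) (mscale (RtoC v3) sigma3)).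

Definition cexpi (x : R) : C := (cos x, sin x).

Definition solves_schrodinger (a b : R) (H U : R -> mat2) : Prop :=
  (forall i j, U a i j = mid i j) /\
  (forall t, a <= t <= b -> forall i j,
     exists l : C, is_cderiv_in a b (fun s => U s i j) t l /\
                   Cmult Ci l = mmul (H t) (U t) i j).

Definition bvec1 (nb th ph : R -> R) (t : R) := nb t * sin (th t) * cos (ph t).
Definition bvec2 (nb th ph : R -> R) (t : R) := nb t * sin (th t) * sin (ph t).
Definition bvec3 (nb th ph : R -> R) (t : R) := nb t * cos (th t).

Definition Hmat (b0 nb th ph : R -> R) (t : R) : mat2 :=
  madd (mscale (RtoC (b0 t)) mid)
       (dot_sigma (bvec1 nb th ph t) (bvec2 nb th ph t) (bvec3 nb th ph t)).

(* Omega_b, with dph the derivative of ph *)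
Definition Omega_b (nb th dph : R -> R) (t : R) : R :=
  sqrt ((cos (th t) - dph t / (2 * nb t)) ^ 2 + (sin (th t)) ^ 2).

Definition gamma_b (nb th dph : R -> R) (t s : R) : R :=
  RInt (fun tau => nb tau * Omega_b nb th dph tau) s t.

Definition Delta (ph : R -> R) (t s : R) := (ph t - ph s) / 2.
Definition Sigma (ph : R -> R) (t s : R) := (ph t + ph s) / 2.

Definition u0 (J1 : R) (nb th ph dph : R -> R) (t s : R) : R :=
  cos (Delta ph t s) * cos (gamma_b nb th dph t s)
  - J1 * sin (Delta ph t s) * sin (gamma_b nb th dph t s).
Definition ut1 (J2 : R) (nb th ph dph : R -> R) (t s : R) : R :=
  - J2 * cos (Sigma ph t s) * sin (gamma_b nb th dph t s).
Definition ut2 (J2 : R) (nb th ph dph : R -> R) (t s : R) : R :=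
  - J2 * sin (Sigma ph t s) * sin (gamma_b nb th dph t s).
Definition ut3 (J1 : R) (nb th ph dph : R -> R) (t s : R) : R :=
  - J1 * cos (Delta ph t s) * sin (gamma_b nb th dph t s)
  - sin (Delta ph t s) * cos (gamma_b nb th dph t s).

Definition U_formula (J1 J2 t0 : R) (b0 nb th ph dph : R -> R) (t : R) : mat2 :=
  mscale (cexpi (- RInt b0 t0 t))
    (madd (mscale (RtoC (u0 J1 nb th ph dph t t0)) mid)
          (mscale Ci (dot_sigma (ut1 J2 nb th ph dph t t0)
                                (ut2 J2 nb th ph dph t t0)
                                (ut3 J1 nb th ph dph t t0)))).

From Pilot Require Import Defs.
From Stdlib Require Import Reals Lra Nsatz.
From Coquelicot Require Import Coquelicot.
Open Scope R_scope.

(* Writing U = e^{iE}(u0 I + i ut.sigma), the equation i U' = H U becomes the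
   real system u0' = b.ut, ut' = -u0 b + b x ut; the pair (u0, ut) is a
   quaternion, and the explicit solution factors as
       u(t,s) = R_z(ph t / 2) . N(gamma(t,s)) . R_z(ph s / 2)^{-1},
   with R_z a rotation about the z-axis and N a rotation about the fixed unit
   axis (J2, 0, J1). *)

Definition punctured (a b t : R) : (R -> Prop) -> Prop :=
  within (fun s => a <= s <= b /\ s <> t) (locally t).

#[local] Instance punctured_filter a b t : Filter (punctured a b t) :=
  within_filter _ _ _ _.

Lemma lim_punctured_plus a b t f g x y :
  filterlim f (punctured a b t) (locally x) -> filterlim g (punctured a b t) (locally y) ->
  filterlim (fun s => f s + g s) (punctured a b t) (locally (x + y)).
Proof.
  intros Hf Hg. eapply filterlim_comp_2; [exact Hf | exact Hg |].
  exact (@filterlim_plus R_AbsRing R_NormedModule x y).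
Qed.

Lemma lim_punctured_mult a b t f g x y :
  filterlim f (punctured a b t) (locally x) -> filterlim g (punctured a b t) (locally y) ->
  filterlim (fun s => f s * g s) (punctured a b t) (locally (x * y)).
Proof.
  intros Hf Hg. eapply filterlim_comp_2; [exact Hf | exact Hg |].
  exact (@filterlim_mult R_AbsRing x y).
Qed.

Lemma is_deriv_in_unfold a b f t l : is_deriv_in a b f t l <->
  filterlim (fun s => (f s - f t) / (s - t)) (punctured a b t) (locally l).
Proof. reflexivity. Qed.

Lemma is_deriv_in_lim a b f t l : is_deriv_in a b f t l ->
  filterlim f (punctured a b t) (locally (f t)).
Proof.
  rewrite is_deriv_in_unfold. intros H.
  apply filterlim_within_ext with
    (f := fun s => f t + (s - t) * ((f s - f t) / (s - t))).
  { intros s [_ Hs]. field. lra. }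
  replace (locally (f t)) with (locally (f t + (t - t) * l)) by (f_equal; ring).
  apply lim_punctured_plus; [apply filterlim_const |].
  apply lim_punctured_mult; [| exact H].
  apply lim_punctured_plus; [| apply filterlim_const].
  intros P HP. apply filter_imp with (2 := HP). auto.
Qed.

Lemma is_deriv_in_cont a b f t l : is_deriv_in a b f t l -> cont_in a b f t.
Proof.
  intros H. apply is_deriv_in_lim in H. rewrite filterlim_locally in H.
  unfold cont_in. rewrite filterlim_locally. intros eps. specialize (H eps).
  unfold punctured, within in H. unfold within. apply filter_imp with (2 := H). intros s Hs Hs_ab.
  destruct (Req_EM_T s t) as [-> | Hst]; [apply ball_center | auto].
Qed.

Lemma is_deriv_in_ext a b f g t l l' : (forall s, f s = g s) -> l = l' ->
  is_deriv_in a b g t l' -> is_deriv_in a b f t l.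
Proof.
  intros E <-. rewrite !is_deriv_in_unfold. apply filterlim_ext.
  intros s. rewrite !E. reflexivity.
Qed.

Lemma is_deriv_in_ext_in a b f g t l : (forall s, a <= s <= b -> f s = g s) ->
  a <= t <= b -> is_deriv_in a b f t l -> is_deriv_in a b g t l.
Proof.
  intros E Ht. rewrite !is_deriv_in_unfold. apply filterlim_within_ext.
  intros s [Hs _]. rewrite !E; auto.
Qed.

Lemma is_deriv_in_const a b t c : is_deriv_in a b (fun _ => c) t 0.
Proof.
  rewrite is_deriv_in_unfold. apply filterlim_ext with (f := fun _ => 0).
  { intros s. unfold Rdiv. ring. }
  apply filterlim_const.
Qed.

Lemma is_deriv_in_plus a b f g t l1 l2 :
  is_deriv_in a b f t l1 -> is_deriv_in a b g t l2 ->
  is_deriv_in a b (fun s => f s + g s) t (l1 + l2).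
Proof.
  rewrite !is_deriv_in_unfold. intros H1 H2.
  apply filterlim_ext with
    (f := fun s => (f s - f t) / (s - t) + (g s - g t) / (s - t)).
  { intros s. unfold Rdiv. ring. }
  apply lim_punctured_plus; auto.
Qed.

Lemma is_deriv_in_mult a b f g t l1 l2 :
  is_deriv_in a b f t l1 -> is_deriv_in a b g t l2 ->
  is_deriv_in a b (fun s => f s * g s) t (f t * l2 + g t * l1).
Proof.
  intros H1 H2. pose proof (is_deriv_in_lim _ _ _ _ _ H1) as Hf.
  rewrite !is_deriv_in_unfold in *.
  apply filterlim_ext with
    (f := fun s => f s * ((g s - g t) / (s - t)) + g t * ((f s - f t) / (s - t))).
  { intros s. unfold Rdiv. ring. }
  apply lim_punctured_plus; apply lim_punctured_mult; auto. apply filterlim_const.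
Qed.

Lemma is_deriv_in_scal a b f t l c : is_deriv_in a b f t l ->
  is_deriv_in a b (fun s => c * f s) t (c * l).
Proof.
  intros H. apply is_deriv_in_ext with (fun s => (fun _ => c) s * f s) (c * l + f t * 0).
  - reflexivity.
  - ring.
  - exact (is_deriv_in_mult _ _ _ _ _ _ _ (is_deriv_in_const a b t c) H).
Qed.

Lemma is_deriv_in_opp a b f t l : is_deriv_in a b f t l ->
  is_deriv_in a b (fun s => - f s) t (- l).
Proof.
  intros H. apply is_deriv_in_ext with (fun s => -1 * f s) (-1 * l);
    [intros s; ring | ring | exact (is_deriv_in_scal _ _ _ _ _ (-1) H)].
Qed.

Lemma is_deriv_in_minus a b f g t l1 l2 :
  is_deriv_in a b f t l1 -> is_deriv_in a b g t l2 ->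
  is_deriv_in a b (fun s => f s - g s) t (l1 - l2).
Proof.
  intros H1 H2. exact (is_deriv_in_plus _ _ _ _ _ _ _ H1 (is_deriv_in_opp _ _ _ _ _ H2)).
Qed.

Lemma is_deriv_in_comp a b F dF g t l : is_derive F (g t) dF ->
  is_deriv_in a b g t l -> is_deriv_in a b (fun s => F (g s)) t (dF * l).
Proof.
  intros HF Hg. pose proof (is_deriv_in_lim _ _ _ _ _ Hg) as Hgc.
  set (y0 := g t) in *.
  (* the difference quotient of F at y0, extended by continuity at y0 *)
  set (q := fun y => if Req_EM_T y y0 then dF else (F y - F y0) / (y - y0)).
  assert (Hq : filterlim q (locally y0) (locally dF)).
  { apply is_derive_Reals in HF. apply filterlim_locally. intros eps.
    destruct (HF eps (cond_pos eps)) as [d Hd]. exists d. intros y Hy.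
    change (Rabs (y - y0) < d) in Hy. change (Rabs (q y - dF) < eps).
    unfold q. destruct (Req_EM_T y y0).
    - rewrite Rminus_diag, Rabs_R0. apply cond_pos.
    - specialize (Hd (y - y0)). rewrite Rplus_minus in Hd. apply Hd; auto. lra. }
  rewrite is_deriv_in_unfold in *.
  apply filterlim_ext with (f := fun s => q (g s) * ((g s - g t) / (s - t))).
  { intros s. unfold q. fold y0. destruct (Req_EM_T (g s) y0) as [E | E].
    - rewrite E. unfold Rdiv. ring.
    - destruct (Req_EM_T s t) as [-> | E']; [fold y0 in E; lra |].
      field. split; lra. }
  apply lim_punctured_mult; auto. eapply filterlim_comp; eauto.
Qed.

Lemma is_deriv_in_cos a b f t l : is_deriv_in a b f t l ->
  is_deriv_in a b (fun s => cos (f s)) t (- sin (f t) * l).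
Proof.
  apply is_deriv_in_comp, is_derive_Reals, derivable_pt_lim_cos.
Qed.

Lemma is_deriv_in_sin a b f t l : is_deriv_in a b f t l ->
  is_deriv_in a b (fun s => sin (f s)) t (cos (f t) * l).
Proof.
  apply is_deriv_in_comp, is_derive_Reals, derivable_pt_lim_sin.
Qed.

Lemma is_deriv_in_of_derive a b f t l : is_derive f t l -> is_deriv_in a b f t l.
Proof.
  intros H. apply is_derive_Reals in H. rewrite is_deriv_in_unfold.
  apply filterlim_locally. intros eps.
  destruct (H eps (cond_pos eps)) as [d Hd].
  exists d. intros y Hy [_ Hyt].
  change (Rabs (y - t) < d) in Hy. change (Rabs ((f y - f t) / (y - t) - l) < eps).
  specialize (Hd (y - t)). rewrite Rplus_minus in Hd. apply Hd; auto. lra.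
Qed.

Lemma is_derive_of_deriv_in a b f t l : a < t < b -> is_deriv_in a b f t l ->
  is_derive f t l.
Proof.
  intros Ht H. apply is_derive_Reals. intros eps Heps.
  rewrite is_deriv_in_unfold, filterlim_locally in H.
  destruct (H (mkposreal eps Heps)) as [d Hd].
  assert (Hr : 0 < Rmin d (Rmin (t - a) (b - t))).
  { apply Rmin_pos; [apply cond_pos | apply Rmin_pos; lra]. }
  exists (mkposreal _ Hr). intros h Hh0 Hh. simpl in Hh.
  pose proof (Rmin_l d (Rmin (t - a) (b - t))).
  pose proof (Rmin_r d (Rmin (t - a) (b - t))).
  pose proof (Rmin_l (t - a) (b - t)). pose proof (Rmin_r (t - a) (b - t)).
  assert (Hin : a <= t + h <= b) by (apply Rabs_def2 in Hh; lra).
  assert (Hb : ball t d (t + h)).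
  { change (Rabs (t + h - t) < d). replace (t + h - t) with h by ring. lra. }
  assert (Hne : t + h <> t) by (intros E; apply Hh0; lra).
  specialize (Hd (t + h) Hb (conj Hin Hne)).
  change (Rabs ((f (t + h) - f t) / (t + h - t) - l) < eps) in Hd.
  replace (t + h - t) with h in Hd by ring. exact Hd.
Qed.

(** Extension of a function on [[a,b]] to [R] by clamping the argument. *)
Definition clamp (a b x : R) : R := Rmax a (Rmin b x).

Lemma clamp_in a b x : a <= b -> a <= clamp a b x <= b.
Proof. intros. unfold clamp, Rmax, Rmin. repeat destruct Rle_dec; lra. Qed.

Lemma clamp_id a b x : a <= x <= b -> clamp a b x = x.
Proof. intros. unfold clamp, Rmax, Rmin. repeat destruct Rle_dec; lra. Qed.

Lemma clamp_lipschitz a b x y : a <= b ->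
  Rabs (clamp a b y - clamp a b x) <= Rabs (y - x).
Proof.
  intros. unfold clamp, Rmax, Rmin.
  repeat destruct Rle_dec; unfold Rabs; repeat destruct Rcase_abs; lra.
Qed.

Lemma continuous_clamp a b f x : a <= b -> cont_in a b f (clamp a b x) ->
  continuous (fun y => f (clamp a b y)) x.
Proof.
  intros Hab H. eapply filterlim_comp; [| exact H].
  intros P [eps HP]. exists eps. intros y Hy.
  apply HP; [| apply clamp_in; auto].
  change (Rabs (clamp a b y - clamp a b x) < eps).
  eapply Rle_lt_trans; [apply clamp_lipschitz; auto | exact Hy].
Qed.

(** A function with zero derivative on [[a,b]] is constant there
    (mean value theorem applied to the clamped extension). *)
Lemma is_deriv_in_zero_const a b f : a <= b ->
  (forall t, a <= t <= b -> is_deriv_in a b f t 0) ->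
  forall x, a <= x <= b -> f x = f a.
Proof.
  intros Hab H x Hx.
  set (g := fun y => f (clamp a b y)).
  assert (Hg : forall y, a <= y <= b -> g y = f y).
  { intros y Hy. unfold g. rewrite clamp_id; auto. }
  destruct (MVT_gen g a x (fun _ => 0)) as [c [_ Hc]].
  - intros y Hy. rewrite Rmin_left, Rmax_right in Hy by lra.
    apply is_derive_of_deriv_in with a b; [lra |].
    apply is_deriv_in_ext_in with f; [intros; symmetry; auto | lra | apply H; lra].
  - intros y Hy. rewrite Rmin_left, Rmax_right in Hy by lra.
    apply continuity_pt_filterlim, continuous_clamp; auto.
    apply is_deriv_in_cont with 0, H, clamp_in; auto.
  - rewrite <- (Hg x), <- (Hg a) by lra. lra.
Qed.

Definition clamp_continuous (a b : R) (f : R -> R) : Prop :=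
  forall y, continuous (fun y => f (clamp a b y)) y.

Lemma clamp_continuous_of_cont_in a b f : a <= b ->
  (forall t, a <= t <= b -> cont_in a b f t) -> clamp_continuous a b f.
Proof. intros Hab H y. apply continuous_clamp, H, clamp_in; auto. Qed.

Lemma RInt_clamp a b f x y : a <= x <= b -> a <= y <= b ->
  RInt (V := R_CompleteNormedModule) f x y = RInt (fun z => f (clamp a b z)) x y.
Proof.
  intros Hx Hy. apply RInt_ext. intros z Hz. rewrite clamp_id; auto.
  unfold Rmin, Rmax in Hz; destruct Rle_dec in Hz; lra.
Qed.

Lemma is_deriv_in_RInt a b f t : a <= t <= b -> clamp_continuous a b f ->
  is_deriv_in a b (fun s => RInt f a s) t (f t).
Proof.
  intros Ht Hf. set (g := fun y => f (clamp a b y)).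
  apply is_deriv_in_ext_in with (fun s => RInt g a s); auto.
  { intros s Hs. symmetry. apply RInt_clamp; lra. }
  replace (f t) with (g t) by (unfold g; rewrite clamp_id; auto).
  apply is_deriv_in_of_derive, is_derive_RInt with a; [| apply Hf].
  apply filter_forall. intros y.
  apply (RInt_correct (V := R_CompleteNormedModule)),
        (ex_RInt_continuous (V := R_CompleteNormedModule)). intros; apply Hf.
Qed.

Lemma RInt_Chasles_in a b f x y z :
  a <= x <= b -> a <= y <= b -> a <= z <= b -> clamp_continuous a b f ->
  RInt f x y + RInt f y z = RInt f x z.
Proof.
  intros Hx Hy Hz Hf.
  rewrite (RInt_clamp a b f x y), (RInt_clamp a b f y z), (RInt_clamp a b f x z) by auto.
  assert (Hex : forall u v, ex_RInt (fun w => f (clamp a b w)) u v).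
  { intros. apply (ex_RInt_continuous (V := R_CompleteNormedModule)). intros; apply Hf. }
  exact (RInt_Chasles (V := R_CompleteNormedModule) _ x y z (Hex _ _) (Hex _ _)).
Qed.

Lemma is_cderiv_in_ext a b (f g : R -> C) t l :
  (forall s, f s = g s) -> is_cderiv_in a b g t l -> is_cderiv_in a b f t l.
Proof.
  intros E [H1 H2].
  split; eapply is_deriv_in_ext; eauto; intros s; rewrite E; reflexivity.
Qed.

Lemma is_cderiv_in_phase a b E dE x y dx dy t :
  is_deriv_in a b E t dE -> is_deriv_in a b x t dx -> is_deriv_in a b y t dy ->
  is_cderiv_in a b (fun s => Cmult (cexpi (E s)) (x s, y s)) t
    (Cmult (cexpi (E t)) (Cplus (dx, dy) (Cmult (0, dE) (x t, y t)))).
Proof.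
  intros HE Hx Hy.
  pose proof (is_deriv_in_cos _ _ _ _ _ HE) as Hc.
  pose proof (is_deriv_in_sin _ _ _ _ _ HE) as Hs.
  split; simpl.
  - apply is_deriv_in_ext with (g := fun s => cos (E s) * x s - sin (E s) * y s)
      (l' := cos (E t) * dx + x t * (- sin (E t) * dE)
       - (sin (E t) * dy + y t * (cos (E t) * dE))); [intros s; ring | ring |].
    exact (is_deriv_in_minus _ _ _ _ _ _ _
             (is_deriv_in_mult _ _ _ _ _ _ _ Hc Hx) (is_deriv_in_mult _ _ _ _ _ _ _ Hs Hy)).
  - apply is_deriv_in_ext with (g := fun s => cos (E s) * y s + sin (E s) * x s)
      (l' := cos (E t) * dy + y t * (- sin (E t) * dE)
       + (sin (E t) * dx + x t * (cos (E t) * dE))); [intros s; ring | ring |].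
    exact (is_deriv_in_plus _ _ _ _ _ _ _
             (is_deriv_in_mult _ _ _ _ _ _ _ Hc Hy) (is_deriv_in_mult _ _ _ _ _ _ _ Hs Hx)).
Qed.

Lemma phase_entry_solves a b E dE x y dx dy t (f : R -> C) (rhs : C) :
  is_deriv_in a b E t dE -> is_deriv_in a b x t dx -> is_deriv_in a b y t dy ->
  (forall s, f s = Cmult (cexpi (E s)) (x s, y s)) ->
  Cmult Ci (Cmult (cexpi (E t)) (Cplus (dx, dy) (Cmult (0, dE) (x t, y t)))) = rhs ->
  exists l, is_cderiv_in a b f t l /\ Cmult Ci l = rhs.
Proof.
  intros HE Hx Hy Ef Erhs. eexists; split; [| exact Erhs].
  eapply is_cderiv_in_ext; [exact Ef | exact (is_cderiv_in_phase _ _ _ _ _ _ _ _ _ HE Hx Hy)].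
Qed.

Definition pauli_ham (c0 c1 c2 c3 : R) : mat2 :=
  madd (mscale (RtoC c0) mid) (dot_sigma c1 c2 c3).

Definition phased_su2 (E w0 w1 w2 w3 : R) : mat2 :=
  mscale (cexpi E) (madd (mscale (RtoC w0) mid) (mscale Ci (dot_sigma w1 w2 w3))).

Ltac mat2_ring :=
  unfold pauli_ham, phased_su2, mmul, madd, mscale, dot_sigma, mid,
    sigma1, sigma2, sigma3, cexpi, RtoC, Ci, Cmult, Cplus, Copp;
  simpl; apply injective_projections; simpl; ring.

Lemma phased_su2_solves a b (c0 c1 c2 c3 E w0 w1 w2 w3 : R -> R) t :
  is_deriv_in a b E t (- c0 t) ->
  is_deriv_in a b w0 t (c1 t * w1 t + c2 t * w2 t + c3 t * w3 t) ->
  is_deriv_in a b w1 t (- w0 t * c1 t + (c2 t * w3 t - c3 t * w2 t)) ->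
  is_deriv_in a b w2 t (- w0 t * c2 t + (c3 t * w1 t - c1 t * w3 t)) ->
  is_deriv_in a b w3 t (- w0 t * c3 t + (c1 t * w2 t - c2 t * w1 t)) ->
  forall i j, exists l : C,
    is_cderiv_in a b (fun s => phased_su2 (E s) (w0 s) (w1 s) (w2 s) (w3 s) i j) t l /\
    Cmult Ci l = mmul (pauli_ham (c0 t) (c1 t) (c2 t) (c3 t))
                      (phased_su2 (E t) (w0 t) (w1 t) (w2 t) (w3 t)) i j.
Proof.
  intros HE H0 H1 H2 H3.
  pose proof (is_deriv_in_opp _ _ _ _ _ H2) as H2'.
  pose proof (is_deriv_in_opp _ _ _ _ _ H3) as H3'.
  (* each entry is [e^{iE}(x + i y)] for a pair [(x,y)] of components of [w] *)
  destruct i, j;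
    [ apply (phase_entry_solves _ _ _ _ _ _ _ _ _ _ _ HE H0 H3')
    | apply (phase_entry_solves _ _ _ _ _ _ _ _ _ _ _ HE H2' H1)
    | apply (phase_entry_solves _ _ _ _ _ _ _ _ _ _ _ HE H2 H1)
    | apply (phase_entry_solves _ _ _ _ _ _ _ _ _ _ _ HE H0 H3) ];
    try intros s; mat2_ring.
Qed.

(** Uniqueness of solutions for Hermitian Hamiltonians: the squared distance
    of two solutions is a conserved quantity. *)
Definition hermitian (A : mat2) : Prop :=
  snd (A false false) = 0 /\ snd (A true true) = 0 /\ A true false = Cconj (A false true).

Lemma pauli_ham_hermitian c0 c1 c2 c3 : hermitian (pauli_ham c0 c1 c2 c3).
Proof.
  unfold hermitian, pauli_ham, madd, mscale, dot_sigma, mid, sigma1, sigma2, sigma3,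
    RtoC, Ci, Cmult, Cplus, Cconj; simpl.
  repeat split; try ring. apply injective_projections; simpl; ring.
Qed.

Definition sqnorm (z : C) : R := fst z * fst z + snd z * snd z.

Lemma sqnorm_nonneg z : 0 <= sqnorm z.
Proof. unfold sqnorm. nra. Qed.

Lemma sqnorm_eq0 z : sqnorm z = 0 -> z = 0.
Proof.
  unfold sqnorm. intros Hz. destruct z as [x y]; simpl in Hz.
  assert (x = 0 /\ y = 0) as [-> ->] by (split; nra). reflexivity.
Qed.

Lemma is_cderiv_in_minus a b (u v : R -> C) t lu lv :
  is_cderiv_in a b u t lu -> is_cderiv_in a b v t lv ->
  is_cderiv_in a b (fun s => Cminus (u s) (v s)) t (Cminus lu lv).
Proof.
  intros [Hu1 Hu2] [Hv1 Hv2].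
  split; simpl.
  - eapply is_deriv_in_ext; [| | exact (is_deriv_in_minus _ _ _ _ _ _ _ Hu1 Hv1)];
      intros; simpl; ring.
  - eapply is_deriv_in_ext; [| | exact (is_deriv_in_minus _ _ _ _ _ _ _ Hu2 Hv2)];
      intros; simpl; ring.
Qed.

Lemma is_deriv_in_sqnorm a b (z : R -> C) t l : is_cderiv_in a b z t l ->
  is_deriv_in a b (fun s => sqnorm (z s)) t (2 * (fst (z t) * fst l + snd (z t) * snd l)).
Proof.
  intros [H1 H2]. unfold sqnorm.
  eapply is_deriv_in_ext; [intros s; reflexivity | |
    exact (is_deriv_in_plus _ _ _ _ _ _ _ (is_deriv_in_mult _ _ _ _ _ _ _ H1 H1)
                                          (is_deriv_in_mult _ _ _ _ _ _ _ H2 H2))].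
  cbv beta. ring.
Qed.

(* The Schroedinger flow of a Hermitian matrix preserves the norm:
   [Re <w, -i A w> = 0]. *)
Lemma hermitian_norm_conserved (A : mat2) (w0 w1 dw0 dw1 : C) : hermitian A ->
  Cmult Ci dw0 = Cplus (Cmult (A false false) w0) (Cmult (A false true) w1) ->
  Cmult Ci dw1 = Cplus (Cmult (A true false) w0) (Cmult (A true true) w1) ->
  fst w0 * fst dw0 + snd w0 * snd dw0 + (fst w1 * fst dw1 + snd w1 * snd dw1) = 0.
Proof.
  intros (H00 & H11 & H10) E0 E1.
  (* [Ci * dw = z] means [dw = (snd z, - fst z)] *)
  assert (D0 : fst dw0 = snd (Cmult Ci dw0) /\ snd dw0 = - fst (Cmult Ci dw0))
    by (simpl; split; ring).
  assert (D1 : fst dw1 = snd (Cmult Ci dw1) /\ snd dw1 = - fst (Cmult Ci dw1))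
    by (simpl; split; ring).
  rewrite E0 in D0. rewrite E1, H10 in D1. destruct D0 as [-> ->], D1 as [-> ->].
  destruct (A false false) as [p q], (A true true) as [r s], (A false true) as [x y].
  simpl in *. subst q s. ring.
Qed.

Lemma schrodinger_unique a b (H U V : R -> mat2) :
  (forall t, a <= t <= b -> hermitian (H t)) ->
  solves_schrodinger a b H U -> solves_schrodinger a b H V ->
  forall t, a <= t <= b -> forall i j, U t i j = V t i j.
Proof.
  intros Hh [U0 HU] [V0 HV] t Ht i j.
  set (W := fun s k => Cminus (U s k j) (V s k j)).
  set (dist := fun s => sqnorm (W s false) + sqnorm (W s true)).
  assert (Hd : forall s, a <= s <= b -> is_deriv_in a b dist s 0).
  { intros s Hs.
    destruct (HU s Hs false j) as [lu0 [Du0 Eu0]], (HU s Hs true j) as [lu1 [Du1 Eu1]],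
      (HV s Hs false j) as [lv0 [Dv0 Ev0]], (HV s Hs true j) as [lv1 [Dv1 Ev1]].
    assert (Ew : forall k lu lv, Cmult Ci lu = mmul (H s) (U s) k j ->
                   Cmult Ci lv = mmul (H s) (V s) k j ->
                   Cmult Ci (Cminus lu lv) =
                   Cplus (Cmult (H s k false) (W s false)) (Cmult (H s k true) (W s true))).
    { intros k lu lv Eu Ev.
      transitivity (Cminus (Cmult Ci lu) (Cmult Ci lv)); [ring |].
      rewrite Eu, Ev. unfold mmul, W. ring. }
    pose proof (hermitian_norm_conserved _ _ _ _ _ (Hh s Hs)
                  (Ew _ _ _ Eu0 Ev0) (Ew _ _ _ Eu1 Ev1)) as Hcons.
    eapply is_deriv_in_ext; [intros r; reflexivity | |
      exact (is_deriv_in_plus _ _ _ _ _ _ _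
               (is_deriv_in_sqnorm _ _ _ _ _ (is_cderiv_in_minus _ _ _ _ _ _ _ Du0 Dv0))
               (is_deriv_in_sqnorm _ _ _ _ _ (is_cderiv_in_minus _ _ _ _ _ _ _ Du1 Dv1)))].
    cbv beta. fold (W s false) (W s true). lra. }
  assert (Hdist : dist t = 0).
  { rewrite (is_deriv_in_zero_const a b dist ltac:(lra) Hd t Ht).
    unfold dist, W. rewrite !U0, !V0. unfold Cminus. rewrite Cplus_opp_r.
    unfold sqnorm; simpl; ring. }
  assert (Hw : W t i = 0).
  { apply sqnorm_eq0. pose proof (sqnorm_nonneg (W t false)).
    pose proof (sqnorm_nonneg (W t true)). unfold dist in Hdist. destruct i; lra. }
  unfold W in Hw. transitivity (Cplus (Cminus (U t i j) (V t i j)) (V t i j)); [ring |].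
  rewrite Hw. ring.
Qed.

(** Quaternions [(q0,q)] standing for [q0 I + i q.sigma]; their product is
    [(p0 q0 - p.q, p0 q + q0 p - p x q)]. *)
Definition quat : Type := (R * R * R * R)%type.

Definition qmul (p q : quat) : quat :=
  let '(p0, p1, p2, p3) := p in let '(q0, q1, q2, q3) := q in
  (p0 * q0 - (p1 * q1 + p2 * q2 + p3 * q3),
   p0 * q1 + q0 * p1 - (p2 * q3 - p3 * q2),
   p0 * q2 + q0 * p2 - (p3 * q1 - p1 * q3),
   p0 * q3 + q0 * p3 - (p1 * q2 - p2 * q1)).

Definition qone : quat := (1, 0, 0, 0).

Ltac quat_eq := repeat apply injective_projections; simpl.

Lemma qmul_assoc p q r : qmul (qmul p q) r = qmul p (qmul q r).
Proof.
  destruct p as [[[? ?] ?] ?], q as [[[? ?] ?] ?], r as [[[? ?] ?] ?].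
  quat_eq; ring.
Qed.

Lemma qmul_1l q : qmul qone q = q.
Proof. destruct q as [[[? ?] ?] ?]. quat_eq; ring. Qed.

(* Rotation by angle [2a] about the z-axis, and by [2g] about the unit
   axis [(J2,0,J1)]. *)
Definition qrot_z (a : R) : quat := (cos a, 0, 0, - sin a).
Definition qrot_axis (J1 J2 g : R) : quat := (cos g, - J2 * sin g, 0, - J1 * sin g).

Lemma qrot_z_inv a : qmul (qrot_z (- a)) (qrot_z a) = qone.
Proof.
  unfold qrot_z. rewrite cos_neg, sin_neg. pose proof (sin2_cos2 a) as P.
  unfold Rsqr in P. quat_eq; nra.
Qed.

Lemma qrot_axis_add J1 J2 g1 g2 : J1 * J1 + J2 * J2 = 1 ->
  qmul (qrot_axis J1 J2 g1) (qrot_axis J1 J2 g2) = qrot_axis J1 J2 (g1 + g2).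
Proof.
  intros HJ. unfold qrot_axis. rewrite cos_plus, sin_plus.
  quat_eq; [| ring | ring | ring].
  replace (sin g1 * sin g2) with ((J1 * J1 + J2 * J2) * (sin g1 * sin g2))
    by (rewrite HJ; ring).
  ring.
Qed.

Definition rot_w0 (J1 D g : R) : R := cos D * cos g - J1 * sin D * sin g.
Definition rot_w1 (J2 S g : R) : R := - J2 * cos S * sin g.
Definition rot_w2 (J2 S g : R) : R := - J2 * sin S * sin g.
Definition rot_w3 (J1 D g : R) : R := - J1 * cos D * sin g - sin D * cos g.

Definition qsol (J1 J2 a b g : R) : quat :=
  (rot_w0 J1 (a - b) g, rot_w1 J2 (a + b) g, rot_w2 J2 (a + b) g, rot_w3 J1 (a - b) g).

Lemma qsol_factor J1 J2 a b g :
  qsol J1 J2 a b g = qmul (qmul (qrot_z a) (qrot_axis J1 J2 g)) (qrot_z (- b)).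
Proof.
  unfold qsol, rot_w0, rot_w1, rot_w2, rot_w3, qrot_z, qrot_axis.
  rewrite cos_neg, sin_neg, cos_minus, sin_minus, cos_plus, sin_plus.
  quat_eq; ring.
Qed.

Lemma qsol_comp J1 J2 a b c g1 g2 : J1 * J1 + J2 * J2 = 1 ->
  qmul (qsol J1 J2 a b g1) (qsol J1 J2 b c g2) = qsol J1 J2 a c (g1 + g2).
Proof.
  intros HJ. rewrite !qsol_factor, !qmul_assoc.
  rewrite <- (qmul_assoc (qrot_z (- b))), qrot_z_inv, qmul_1l.
  rewrite <- (qmul_assoc (qrot_axis J1 J2 g1)), qrot_axis_add by exact HJ.
  reflexivity.
Qed.

Lemma rot_ode_algebra cS sS cD sD cg sg J1 J2 w m :
  cS * cS + sS * sS = 1 -> cD * cD + sD * sD = 1 -> J1 * J1 + J2 * J2 = 1 ->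
  let v0 := cD * cg - J1 * sD * sg in
  let v1 := - J2 * cS * sg in
  let v2 := - J2 * sS * sg in
  let v3 := - J1 * cD * sg - sD * cg in
  let c1 := J2 * w * (cS * cD - sS * sD) in
  let c2 := J2 * w * (sS * cD + cS * sD) in
  let c3 := J1 * w + m in
  - sD * m * cg - cD * sg * w - J1 * (cD * m * sg + sD * cg * w)
    = c1 * v1 + c2 * v2 + c3 * v3 /\
  - J2 * (- sS * m * sg + cS * cg * w) = - v0 * c1 + (c2 * v3 - c3 * v2) /\
  - J2 * (cS * m * sg + sS * cg * w) = - v0 * c2 + (c3 * v1 - c1 * v3) /\
  - J1 * (- sD * m * sg + cD * cg * w) - (cD * m * cg - sD * sg * w)
    = - v0 * c3 + (c1 * v2 - c2 * v1).
Proof. intros HS HD HJ. cbv zeta. split; [| split; [| split]]; nsatz. Qed.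

Lemma rot_ode a b J1 J2 (D S g : R -> R) t m w c1 c2 c3 :
  J1 * J1 + J2 * J2 = 1 ->
  is_deriv_in a b D t m -> is_deriv_in a b S t m -> is_deriv_in a b g t w ->
  c1 = J2 * w * cos (S t + D t) -> c2 = J2 * w * sin (S t + D t) -> c3 = J1 * w + m ->
  let v0 := fun s => rot_w0 J1 (D s) (g s) in
  let v1 := fun s => rot_w1 J2 (S s) (g s) in
  let v2 := fun s => rot_w2 J2 (S s) (g s) in
  let v3 := fun s => rot_w3 J1 (D s) (g s) in
  is_deriv_in a b v0 t (c1 * v1 t + c2 * v2 t + c3 * v3 t) /\
  is_deriv_in a b v1 t (- v0 t * c1 + (c2 * v3 t - c3 * v2 t)) /\
  is_deriv_in a b v2 t (- v0 t * c2 + (c3 * v1 t - c1 * v3 t)) /\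
  is_deriv_in a b v3 t (- v0 t * c3 + (c1 * v2 t - c2 * v1 t)).
Proof.
  intros HJ HD HS Hg -> -> -> v0 v1 v2 v3.
  pose proof (is_deriv_in_cos _ _ _ _ _ HD) as cD. pose proof (is_deriv_in_sin _ _ _ _ _ HD) as sD.
  pose proof (is_deriv_in_cos _ _ _ _ _ HS) as cS. pose proof (is_deriv_in_sin _ _ _ _ _ HS) as sS.
  pose proof (is_deriv_in_cos _ _ _ _ _ Hg) as cg. pose proof (is_deriv_in_sin _ _ _ _ _ Hg) as sg.
  assert (Pyth : forall x, cos x * cos x + sin x * sin x = 1).
  { intros x. pose proof (sin2_cos2 x) as P. unfold Rsqr in P. lra. }
  destruct (rot_ode_algebra (cos (S t)) (sin (S t)) (cos (D t)) (sin (D t))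
              (cos (g t)) (sin (g t)) J1 J2 w m (Pyth _) (Pyth _) HJ) as (E0 & E1 & E2 & E3).
  subst v0 v1 v2 v3; unfold rot_w0, rot_w1, rot_w2, rot_w3.
  rewrite cos_plus, sin_plus.
  split; [| split; [| split]]; eapply is_deriv_in_ext; try (intros s; reflexivity).
  2: exact (is_deriv_in_minus _ _ _ _ _ _ _ (is_deriv_in_mult _ _ _ _ _ _ _ cD cg)
              (is_deriv_in_mult _ _ _ _ _ _ _ (is_deriv_in_scal _ _ _ _ _ J1 sD) sg)).
  3: exact (is_deriv_in_mult _ _ _ _ _ _ _ (is_deriv_in_scal _ _ _ _ _ (- J2) cS) sg).
  4: exact (is_deriv_in_mult _ _ _ _ _ _ _ (is_deriv_in_scal _ _ _ _ _ (- J2) sS) sg).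
  5: exact (is_deriv_in_minus _ _ _ _ _ _ _
              (is_deriv_in_mult _ _ _ _ _ _ _ (is_deriv_in_scal _ _ _ _ _ (- J1) cD) sg)
              (is_deriv_in_mult _ _ _ _ _ _ _ sD cg)).
  all: cbv beta; lra.
Qed.

Definition gamma_rate (nb th dph : R -> R) (t : R) : R := nb t * Omega_b nb th dph t.

Lemma u_qsol J1 J2 nb th ph dph t s :
  (u0 J1 nb th ph dph t s, ut1 J2 nb th ph dph t s, ut2 J2 nb th ph dph t s,
   ut3 J1 nb th ph dph t s) = qsol J1 J2 (ph t / 2) (ph s / 2) (gamma_b nb th dph t s).
Proof.
  unfold qsol, u0, ut1, ut2, ut3, rot_w0, rot_w1, rot_w2, rot_w3, Defs.Delta, Defs.Sigma.
  replace (ph t / 2 - ph s / 2) with ((ph t - ph s) / 2) by field.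
  replace (ph t / 2 + ph s / 2) with ((ph t + ph s) / 2) by field.
  reflexivity.
Qed.

Lemma u_diag J1 J2 nb th ph dph s :
  u0 J1 nb th ph dph s s = 1 /\ ut1 J2 nb th ph dph s s = 0 /\
  ut2 J2 nb th ph dph s s = 0 /\ ut3 J1 nb th ph dph s s = 0.
Proof.
  assert (G : gamma_b nb th dph s s = 0)
    by exact (RInt_point (V := R_CompleteNormedModule) s _).
  assert (D : Defs.Delta ph s s = 0) by (unfold Defs.Delta; field).
  unfold u0, ut1, ut2, ut3. rewrite G, D, cos_0, sin_0. repeat split; ring.
Qed.

Section ConstantAxisField.

Variables (t0 T : R) (b0 nb th ph dph : R -> R) (J1 J2 : R).
Hypothesis Hb0 : forall t, t0 <= t <= T -> cont_in t0 T b0 t.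
Hypothesis Hnb_pos : forall t, t0 <= t <= T -> 0 < nb t.
Hypothesis Hnb : forall t, t0 <= t <= T -> cont_in t0 T nb t.
Hypothesis Hth : forall t, t0 <= t <= T -> cont_in t0 T th t.
Hypothesis Hph_d : forall t, t0 <= t <= T -> is_deriv_in t0 T ph t (dph t).
Hypothesis Hdph : forall t, t0 <= t <= T -> cont_in t0 T dph t.
Hypothesis HOm : forall t, t0 <= t <= T -> 0 < Omega_b nb th dph t.
Hypothesis HJ1 : forall t, t0 <= t <= T ->
  (cos (th t) - dph t / (2 * nb t)) / Omega_b nb th dph t = J1.
Hypothesis HJ2 : forall t, t0 <= t <= T -> sin (th t) / Omega_b nb th dph t = J2.

(* [(J1, J2)] is a unit vector, being [(x, y) / sqrt (x^2 + y^2)] at [t0]. *)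
Lemma J_unit : t0 <= T -> J1 * J1 + J2 * J2 = 1.
Proof.
  intros Hle. assert (Ht : t0 <= t0 <= T) by lra.
  rewrite <- (HJ1 t0 Ht), <- (HJ2 t0 Ht). pose proof (HOm t0 Ht) as HO.
  unfold Omega_b in *.
  set (x := cos (th t0) - dph t0 / (2 * nb t0)) in *. set (y := sin (th t0)) in *.
  assert (E : sqrt (x ^ 2 + y ^ 2) * sqrt (x ^ 2 + y ^ 2) = x ^ 2 + y ^ 2)
    by (apply sqrt_sqrt; nra).
  set (O := sqrt (x ^ 2 + y ^ 2)) in *.
  replace (x / O * (x / O) + y / O * (y / O)) with ((x ^ 2 + y ^ 2) / (O * O))
    by (field; lra).
  rewrite E. field. nra.
Qed.

Lemma bvec_decomposition t : t0 <= t <= T ->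
  bvec1 nb th ph t = J2 * gamma_rate nb th dph t * cos (ph t) /\
  bvec2 nb th ph t = J2 * gamma_rate nb th dph t * sin (ph t) /\
  bvec3 nb th ph t = J1 * gamma_rate nb th dph t + dph t / 2.
Proof.
  intros Ht. rewrite <- (HJ1 t Ht), <- (HJ2 t Ht).
  pose proof (HOm t Ht). pose proof (Hnb_pos t Ht).
  unfold bvec1, bvec2, bvec3, gamma_rate. repeat split; field; lra.
Qed.

Lemma continuous_Rpow2 (f : R -> R) x : continuous f x -> continuous (fun y => f y ^ 2) x.
Proof.
  intros Hf. refine (continuous_ext (fun y => f y * f y) _ x _ _); [intros y; simpl; ring |].
  apply (continuous_mult (K := R_AbsRing)); exact Hf.
Qed.

Lemma gamma_rate_clamp_continuous : t0 <= T -> clamp_continuous t0 T (gamma_rate nb th dph).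
Proof.
  intros Hle y. pose proof (clamp_in t0 T y Hle) as Hy.
  pose proof (continuous_clamp _ _ _ y Hle (Hnb _ Hy)) as Cnb.
  pose proof (continuous_clamp _ _ _ y Hle (Hdph _ Hy)) as Cdph.
  pose proof (continuous_clamp _ _ _ y Hle (Hth _ Hy)) as Cth.
  pose proof (Hnb_pos _ Hy).
  unfold gamma_rate, Omega_b.
  apply (continuous_mult (K := R_AbsRing)); [exact Cnb |].
  apply continuous_sqrt_comp.
  apply (continuous_plus (V := R_NormedModule)); apply continuous_Rpow2.
  - apply (continuous_minus (V := R_NormedModule)); [apply continuous_cos_comp, Cth |].
    apply (continuous_mult (K := R_AbsRing)); [exact Cdph |].
    apply continuous_Rinv_comp; [| lra].
    apply (continuous_mult (K := R_AbsRing)); [apply continuous_const | exact Cnb].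
  - apply continuous_sin_comp, Cth.
Qed.

Lemma gamma_deriv t : t0 <= t <= T ->
  is_deriv_in t0 T (fun s => gamma_b nb th dph s t0) t (gamma_rate nb th dph t).
Proof.
  intros Ht. apply is_deriv_in_RInt; [exact Ht |].
  apply gamma_rate_clamp_continuous. lra.
Qed.

Lemma gamma_Chasles s t : t0 <= s -> s <= t -> t <= T ->
  gamma_b nb th dph t t0 = gamma_b nb th dph t s + gamma_b nb th dph s t0.
Proof.
  intros Hs Hst HtT. unfold gamma_b.
  change (fun tau => nb tau * Omega_b nb th dph tau) with (gamma_rate nb th dph).
  rewrite <- (RInt_Chasles_in t0 T (gamma_rate nb th dph) t0 s t) by
    (lra || (apply gamma_rate_clamp_continuous; lra)).
  ring.
Qed.

Lemma Delta_deriv t : t0 <= t <= T ->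
  is_deriv_in t0 T (fun s => Defs.Delta ph s t0) t (dph t / 2).
Proof.
  intros Ht. apply is_deriv_in_ext with (g := fun s => / 2 * (ph s - ph t0)) (l' := / 2 * (dph t - 0));
    [intros s; unfold Defs.Delta; field | field |].
  apply is_deriv_in_scal, is_deriv_in_minus; [exact (Hph_d t Ht) | apply is_deriv_in_const].
Qed.

Lemma Sigma_deriv t : t0 <= t <= T ->
  is_deriv_in t0 T (fun s => Defs.Sigma ph s t0) t (dph t / 2).
Proof.
  intros Ht. apply is_deriv_in_ext with (g := fun s => / 2 * (ph s + ph t0)) (l' := / 2 * (dph t + 0));
    [intros s; unfold Defs.Sigma; field | field |].
  apply is_deriv_in_scal, is_deriv_in_plus; [exact (Hph_d t Ht) | apply is_deriv_in_const].
Qed.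

Lemma u_ode t : t0 <= t <= T ->
  let b1 := bvec1 nb th ph in
  let b2 := bvec2 nb th ph in
  let b3 := bvec3 nb th ph in
  let v0 := u0 J1 nb th ph dph in
  let v1 := ut1 J2 nb th ph dph in
  let v2 := ut2 J2 nb th ph dph in
  let v3 := ut3 J1 nb th ph dph in
  is_deriv_in t0 T (fun s => v0 s t0) t
    (b1 t * v1 t t0 + b2 t * v2 t t0 + b3 t * v3 t t0) /\
  is_deriv_in t0 T (fun s => v1 s t0) t
    (- v0 t t0 * b1 t + (b2 t * v3 t t0 - b3 t * v2 t t0)) /\
  is_deriv_in t0 T (fun s => v2 s t0) t
    (- v0 t t0 * b2 t + (b3 t * v1 t t0 - b1 t * v3 t t0)) /\
  is_deriv_in t0 T (fun s => v3 s t0) t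
    (- v0 t t0 * b3 t + (b1 t * v2 t t0 - b2 t * v1 t t0)).
Proof.
  intros Ht. destruct (bvec_decomposition t Ht) as (E1 & E2 & E3).
  assert (Eph : ph t = Defs.Sigma ph t t0 + Defs.Delta ph t t0) by (unfold Defs.Sigma, Defs.Delta; field).
  rewrite Eph in E1, E2.
  exact (rot_ode t0 T J1 J2 (fun s => Defs.Delta ph s t0) (fun s => Defs.Sigma ph s t0)
           (fun s => gamma_b nb th dph s t0) t _ _ _ _ _ (J_unit ltac:(lra))
           (Delta_deriv t Ht) (Sigma_deriv t Ht) (gamma_deriv t Ht) E1 E2 E3).
Qed.

Lemma u_comp s t : t0 <= s -> s <= t -> t <= T ->
  let v0 := u0 J1 nb th ph dph in
  let v1 := ut1 J2 nb th ph dph in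
  let v2 := ut2 J2 nb th ph dph in
  let v3 := ut3 J1 nb th ph dph in
  qmul (v0 t s, v1 t s, v2 t s, v3 t s) (v0 s t0, v1 s t0, v2 s t0, v3 s t0)
  = (v0 t t0, v1 t t0, v2 t t0, v3 t t0).
Proof.
  intros Hs Hst HtT. cbv zeta.
  rewrite !u_qsol, (gamma_Chasles s t) by assumption.
  apply qsol_comp, J_unit. lra.
Qed.

Lemma U_formula_solves :
  solves_schrodinger t0 T (Hmat b0 nb th ph) (U_formula J1 J2 t0 b0 nb th ph dph).
Proof.
  split.
  - intros i j. destruct (u_diag J1 J2 nb th ph dph t0) as (I0 & I1 & I2 & I3).
    change (phased_su2 (- RInt b0 t0 t0) (u0 J1 nb th ph dph t0 t0)
              (ut1 J2 nb th ph dph t0 t0) (ut2 J2 nb th ph dph t0 t0)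
              (ut3 J1 nb th ph dph t0 t0) i j = mid i j).
    assert (R0 : RInt b0 t0 t0 = 0) by exact (RInt_point (V := R_CompleteNormedModule) t0 _).
    rewrite R0, Ropp_0, I0, I1, I2, I3.
    unfold phased_su2, cexpi. rewrite cos_0, sin_0. destruct i, j; mat2_ring.
  - intros t Ht.
    assert (HE : is_deriv_in t0 T (fun s => - RInt b0 t0 s) t (- b0 t)).
    { apply is_deriv_in_opp, is_deriv_in_RInt; [exact Ht |].
      apply clamp_continuous_of_cont_in; [lra | exact Hb0]. }
    destruct (u_ode t Ht) as (O0 & O1 & O2 & O3).
    exact (phased_su2_solves t0 T b0 (bvec1 nb th ph) (bvec2 nb th ph) (bvec3 nb th ph)
             _ _ _ _ _ t HE O0 O1 O2 O3).
Qed.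

End ConstantAxisField.

Theorem theorem3
  (t0 T : R) (b0 nb th ph dth dph : R -> R) (J1 J2 : R)
  (Hb0 : forall t, t0 <= t <= T -> cont_in t0 T b0 t)
  (Hnb_pos : forall t, t0 <= t <= T -> 0 < nb t)
  (Hnb : forall t, t0 <= t <= T -> cont_in t0 T nb t)
  (Hth_d : forall t, t0 <= t <= T -> is_deriv_in t0 T th t (dth t))
  (Hdth : forall t, t0 <= t <= T -> cont_in t0 T dth t)
  (Hph_d : forall t, t0 <= t <= T -> is_deriv_in t0 T ph t (dph t))
  (Hdph : forall t, t0 <= t <= T -> cont_in t0 T dph t)
  (HOm : forall t, t0 <= t <= T -> 0 < Omega_b nb th dph t)
  (HJ1 : forall t, t0 <= t <= T ->
     (cos (th t) - dph t / (2 * nb t)) / Omega_b nb th dph t = J1)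
  (HJ2 : forall t, t0 <= t <= T -> sin (th t) / Omega_b nb th dph t = J2) :
  let b1 := bvec1 nb th ph in
  let b2 := bvec2 nb th ph in
  let b3 := bvec3 nb th ph in
  let v0 := u0 J1 nb th ph dph in
  let v1 := ut1 J2 nb th ph dph in
  let v2 := ut2 J2 nb th ph dph in
  let v3 := ut3 J1 nb th ph dph in
  (* U_H(t,t0) is given by the formula: the formula solves the Schroedinger
     equation and every solution coincides with it on [t0,T] *)
  solves_schrodinger t0 T (Hmat b0 nb th ph) (U_formula J1 J2 t0 b0 nb th ph dph) /\
  (forall U : R -> mat2, solves_schrodinger t0 T (Hmat b0 nb th ph) U ->
     forall t, t0 <= t <= T -> forall i j,
       U t i j = U_formula J1 J2 t0 b0 nb th ph dph t i j) /\
  (* (u0, ut) solves the real ODE system with initial data (1, 0) *)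
  (v0 t0 t0 = 1 /\ v1 t0 t0 = 0 /\ v2 t0 t0 = 0 /\ v3 t0 t0 = 0) /\
  (forall t, t0 <= t <= T ->
     is_deriv_in t0 T (fun s => v0 s t0) t
       (b1 t * v1 t t0 + b2 t * v2 t t0 + b3 t * v3 t t0) /\
     is_deriv_in t0 T (fun s => v1 s t0) t
       (- v0 t t0 * b1 t + (b2 t * v3 t t0 - b3 t * v2 t t0)) /\
     is_deriv_in t0 T (fun s => v2 s t0) t
       (- v0 t t0 * b2 t + (b3 t * v1 t t0 - b1 t * v3 t t0)) /\
     is_deriv_in t0 T (fun s => v3 s t0) t
       (- v0 t t0 * b3 t + (b1 t * v2 t t0 - b2 t * v1 t t0))) /\
  (* composition identities *)
  (forall s t, t0 <= s -> s <= t -> t <= T ->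
     v0 t s * v0 s t0
       - (v1 t s * v1 s t0 + v2 t s * v2 s t0 + v3 t s * v3 s t0) = v0 t t0 /\
     v0 t s * v1 s t0 + v0 s t0 * v1 t s
       - (v2 t s * v3 s t0 - v3 t s * v2 s t0) = v1 t t0 /\
     v0 t s * v2 s t0 + v0 s t0 * v2 t s
       - (v3 t s * v1 s t0 - v1 t s * v3 s t0) = v2 t t0 /\
     v0 t s * v3 s t0 + v0 s t0 * v3 t s
       - (v1 t s * v2 s t0 - v2 t s * v1 s t0) = v3 t t0).

Proof.
  intros b1 b2 b3 v0 v1 v2 v3.
  assert (Hth : forall t, t0 <= t <= T -> cont_in t0 T th t)
    by (intros t Ht; exact (is_deriv_in_cont _ _ _ _ _ (Hth_d t Ht))).
  pose proof (U_formula_solves t0 T b0 nb th ph dph J1 J2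
                Hb0 Hnb_pos Hnb Hth Hph_d Hdph HOm HJ1 HJ2) as Hsol.
  split; [exact Hsol |].
  split.
  { intros U HU t Ht i j.
    exact (schrodinger_unique t0 T (Hmat b0 nb th ph) U _
             (fun s _ => pauli_ham_hermitian _ _ _ _) HU Hsol t Ht i j). }
  split; [exact (u_diag J1 J2 nb th ph dph t0) |].
  split.
  { intros t Ht.
    exact (u_ode t0 T nb th ph dph J1 J2 Hnb_pos Hnb Hth Hph_d Hdph HOm HJ1 HJ2 t Ht). }
  (* the composition identities are the components of [U(t,s) U(s,t0) = U(t,t0)] *)
  intros s t Hs Hst HtT.
  pose proof (u_comp t0 T nb th ph dph J1 J2 Hnb_pos Hnb Hth Hdph HOm HJ1 HJ2 s t Hs Hst HtT)
    as Q.
  injection Q as Q0 Q1 Q2 Q3. repeat split; assumption.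
Qed.
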